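(* Let $p\in(0,1)$ and let $B\ge 1$ be an integer. For $q\in(0,1]$ define $r_B(q)$ by: if $B=1$, $r_1(q)=\frac{p}{p+q-pq}$; if $B>1$ and $q\neq p$, $$r_B(q)=\frac{\frac{p}{q}\Big(1-\big(\frac{p(1-q)}{q(1-p)}\big)^B\Big)}{1-\frac{p}{q}\big(\frac{p(1-q)}{q(1-p)}\big)^B},$$ and if $B>1$ and $q=p$, $r_B(p)=\frac{B}{B+1-p}$. Let $f_B(q)=q\,r_B(q)$ for $q\in(0,1]$ and $f_B(0)=0$. Then $f_B$ is an increasing function of $q$ on $[0,1]$.
   Context: Interpretation: $r_B(q)$ is the stationary probability that the battery (of capacity $B$ energy units) of a transmitter is nonempty, when one unit of energy arrives per slot with probability $p$ (i.i.d. Bernoulli) and, whenever the battery is nonempty, one unit is spent for a transmission with probability $q$. Then $f_B(q)$ is the probability that the transmitter transmits in a given slot. *)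

From HB Require Import structures.
From mathcomp Require Import all_boot all_order all_algebra.
Set Implicit Arguments. Unset Strict Implicit. Unset Printing Implicit Defensive.
Import Order.TTheory GRing.Theory Num.Theory.
Local Open Scope ring_scope.

(* r_B(q): stationary probability that the battery (capacity B) is nonempty,
   arrival probability p, transmission probability q. Only meaningful for
   q in (0,1] and B >= 1. *)
Definition rB (R : realFieldType) (p : R) (B : nat) (q : R) : R :=
  if B == 1%N then p / (p + q - p * q)
  else if q == p then B%:R / (B%:R + 1 - p)
  else let a := (p * (1 - q)) / (q * (1 - p)) in
       (p / q * (1 - a ^+ B)) / (1 - p / q * a ^+ B).

Definition fB (R : realFieldType) (p : R) (B : nat) (q : R) : R :=
  if q == 0 then 0 else q * rB p B q.

From HB Require Import structures.
From mathcomp Require Import all_boot all_order all_algebra.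
From mathcomp Require Import ring lra.
Import Order.TTheory GRing.Theory Num.Theory.
Local Open Scope ring_scope.

(* With c = p/(1-p) and t = 1/q - 1, the ratio r_B(q) equals h/(q + h) for the
   polynomial h(t) = c + c^2 t + ... + c^B t^(B-1), so that
   1/f_B(q) = 1 + t + 1/h(t).  As t decreases with q, it suffices that
   t + 1/h(t) is strictly increasing on [0, oo), i.e. that
   h(x) - h(y) < (x - y) h(x) h(y) for 0 <= y < x; this follows by induction
   on B from the recursion h_(n+1)(t) = c + c t h_n(t). *)

Fixpoint hsum {R : pzRingType} (c : R) (n : nat) (t : R) : R :=
  if n is n'.+1 then c + c * t * hsum c n' t else 0.

Section HSumAlgebra.

Variable R : comPzRingType.
Implicit Types (c t : R) (n : nat).

Lemma hsum_geometric c n t : (1 - c * t) * hsum c n t = c * (1 - (c * t) ^+ n).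
Proof.
elim: n => [|n IH] /=; first by rewrite mulr0 expr0 subrr mulr0.
rewrite exprSr.
transitivity (c * (1 - c * t) + c * t * ((1 - c * t) * hsum c n t)); first ring.
by rewrite IH; ring.
Qed.

Lemma hsum_critical c n t : c * t = 1 -> hsum c n t = n%:R * c.
Proof.
move=> ct1; elim: n => [|n IH] /=; first by rewrite mul0r.
by rewrite ct1 mul1r IH -[n.+1]addn1 natrD; ring.
Qed.

End HSumAlgebra.

Section HSumOrder.

Variable R : realDomainType.
Implicit Types (c t x y : R) (n : nat).

Lemma hsum_ge0 c n t : 0 <= c -> 0 <= t -> 0 <= hsum c n t.
Proof.
move=> c0 t0; elim: n => [|n IH] //=.
by apply: addr_ge0 => //; rewrite !mulr_ge0.
Qed.

Lemma hsum_gt0 c n t : 0 < c -> 0 <= t -> 0 < hsum c n.+1 t.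
Proof.
move=> c0 t0 /=; apply: ltr_wpDr => //.
by rewrite !mulr_ge0 ?hsum_ge0 // ltW.
Qed.

Lemma hsum_ltS c n t : 0 < c -> 0 < t -> hsum c n t < hsum c n.+1 t.
Proof.
move=> c0 t0; elim: n => [|n IH] /=; first by rewrite mulr0 addr0.
by rewrite ltrD2l ltr_pM2l // mulr_gt0.
Qed.

Lemma hsum_diff_stepS c n x y : 0 < c -> 0 <= y -> y < x ->
  hsum c n x - hsum c n y <= (x - y) * hsum c n x * hsum c n y ->
  hsum c n.+1 x - hsum c n.+1 y < (x - y) * hsum c n.+1 x * hsum c n.+1 y.
Proof.
move=> c0 y0 yx IH /=.
set hx := hsum c n x; set hy := hsum c n y.
have hy0 : 0 <= hy by rewrite hsum_ge0 // ltW.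
have hxS : hx < c + c * x * hx by apply: (hsum_ltS c n x c0); lra.
have weight0 : 0 < c * (x - y) * (1 + y * hy).
  by rewrite !mulr_gt0 ?subr_gt0 // ltr_wpDr ?mulr_ge0.
have IHy : c * y * (hx - hy) <= c * y * ((x - y) * hx * hy).
  by rewrite ler_wpM2l // mulr_ge0 // ltW.
(* After the induction hypothesis, both sides are c (x - y) (1 + y hy) times
   hx, resp. times h_(n+1)(x) > hx. *)
have lhsE : c + c * x * hx - (c + c * y * hy)
    = c * (x - y) * hx + c * y * (hx - hy) by ring.
have rhsE : (x - y) * (c + c * x * hx) * (c + c * y * hy)
    = c * (x - y) * (1 + y * hy) * (c + c * x * hx) by ring.
have boundE : c * (x - y) * hx + c * y * ((x - y) * hx * hy)
    = c * (x - y) * (1 + y * hy) * hx by ring.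
have hlt : c * (x - y) * (1 + y * hy) * hx
    < c * (x - y) * (1 + y * hy) * (c + c * x * hx) by rewrite ltr_pM2l.
rewrite lhsE rhsE; lra.
Qed.

Lemma hsum_diff_le c n x y : 0 < c -> 0 <= y -> y < x ->
  hsum c n x - hsum c n y <= (x - y) * hsum c n x * hsum c n y.
Proof.
move=> c0 y0 yx; elim: n => [|n IH] /=; first by rewrite subrr !mulr0.
exact/ltW/hsum_diff_stepS.
Qed.

Lemma hsum_diff_lt c n x y : 0 < c -> 0 <= y -> y < x ->
  hsum c n.+1 x - hsum c n.+1 y < (x - y) * hsum c n.+1 x * hsum c n.+1 y.
Proof. by move=> c0 y0 yx; apply/hsum_diff_stepS/hsum_diff_le. Qed.

End HSumOrder.

Lemma hsum_add_inv_lt {R : realFieldType} (c : R) n x y :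
  0 < c -> 0 <= y -> y < x ->
  y + (hsum c n.+1 y)^-1 < x + (hsum c n.+1 x)^-1.
Proof.
move=> c0 y0 yx.
have hx0 : 0 < hsum c n.+1 x by apply: hsum_gt0; lra.
have hy0 : 0 < hsum c n.+1 y by apply: hsum_gt0.
rewrite -subr_gt0.
have -> : x + (hsum c n.+1 x)^-1 - (y + (hsum c n.+1 y)^-1)
    = ((x - y) * hsum c n.+1 x * hsum c n.+1 y - (hsum c n.+1 x - hsum c n.+1 y))
      / (hsum c n.+1 x * hsum c n.+1 y).
  by field; rewrite !gt_eqF.
by rewrite divr_gt0 ?mulr_gt0 // subr_gt0 hsum_diff_lt.
Qed.

Lemma rB_hsum {R : realFieldType} (p : R) B q :
  0 < p -> p < 1 -> (1 <= B)%N -> 0 < q -> q <= 1 ->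
  rB p B q = hsum (p / (1 - p)) B (q^-1 - 1) / (q + hsum (p / (1 - p)) B (q^-1 - 1)).
Proof.
move=> p0 p1 B1 q0 q1.
have p1_neq0 : 1 - p != 0 by rewrite subr_eq0 gt_eqF.
have [q_neq0 p_neq0] : q != 0 /\ p != 0 by rewrite !gt_eqF.
have c0 : 0 < p / (1 - p) by rewrite divr_gt0 // subr_gt0.
have t0 : 0 <= q^-1 - 1 by rewrite subr_ge0 invf_ge1.
have h0 : 0 < hsum (p / (1 - p)) B (q^-1 - 1).
  by case: B B1 => // n _; apply: hsum_gt0.
rewrite /rB; case: eqP => [-> | B_neq1].
  rewrite /= mulr0 addr0.
  have : 0 < q * (1 - p) + p by nra.
  by move=> /gt_eqF den_neq0; field; rewrite p1_neq0 den_neq0.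
set h := hsum _ B _ in h0 *.
have qh_neq0 : q + h != 0 by rewrite gt_eqF ?addr_gt0.
case: eqP => [qp | q_neqp].
  have ct1 : p / (1 - p) * (q^-1 - 1) = 1.
    by rewrite qp; field; rewrite p1_neq0 p_neq0.
  have hE : h = B%:R * (p / (1 - p)) by rewrite /h hsum_critical.
  have : (1 <= B%:R :> R) by rewrite ler1n.
  move: qh_neq0; rewrite hE qp => qh_neq0 B1R.
  by field; rewrite p1_neq0 /= !gt_eqF //; nra.
set a := p * (1 - q) / (q * (1 - p)).
have aE : p / (1 - p) * (q^-1 - 1) = a by rewrite /a; field; rewrite q_neq0 p1_neq0.
(* Eliminate a^B through the geometric sum (1 - a) h = c (1 - a^B). *)
have aB : a ^+ B = 1 - (1 - a) * h / (p / (1 - p)).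
  by rewrite /h -aE hsum_geometric; field; rewrite p1_neq0 p_neq0.
have qp_neq0 : q - p != 0 by rewrite subr_eq0; apply/eqP.
have denE : q * q - (q * p - (q * (1 - p) - p * (1 - q)) * h) = (q - p) * (q + h).
  by ring.
by rewrite aB /a; field; rewrite denE mulf_neq0 // qh_neq0 p1_neq0 p_neq0 q_neq0.
Qed.

Lemma fB_hsum {R : realFieldType} (p : R) B q :
  0 < p -> p < 1 -> (1 <= B)%N -> 0 < q -> q <= 1 ->
  fB p B q = (q^-1 + (hsum (p / (1 - p)) B (q^-1 - 1))^-1)^-1.
Proof.
move=> p0 p1 B1 q0 q1; rewrite /fB gt_eqF // rB_hsum //.
have h0 : 0 < hsum (p / (1 - p)) B (q^-1 - 1).
  by case: B B1 => // n _; rewrite hsum_gt0 ?divr_gt0 ?subr_gt0 // subr_ge0 invf_ge1.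
by field; rewrite !gt_eqF ?addr_gt0.
Qed.

Theorem lemma1 (R : realFieldType) (p : R) (B : nat) :
  0 < p -> p < 1 -> (1 <= B)%N ->
  forall x y : R, 0 <= x -> x < y -> y <= 1 -> fB p B x < fB p B y.
Proof.
move=> p0 p1 B1 x y x0 xy y1.
set c := p / (1 - p).
have c0 : 0 < c by rewrite divr_gt0 // subr_gt0.
have t0 (q : R) : 0 < q -> q <= 1 -> 0 <= q^-1 - 1.
  by move=> q0 q1; rewrite subr_ge0 invf_ge1.
have y0 : 0 < y by lra.
rewrite [fB p B y]fB_hsum // -/c.
case: B B1 => // n _.
have rate0 (q : R) : 0 < q -> q <= 1 -> 0 < q^-1 + (hsum c n.+1 (q^-1 - 1))^-1.
  by move=> q0 q1; rewrite addr_gt0 ?invr_gt0 ?hsum_gt0 ?t0.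
have [-> | x_neq0] := eqVneq x 0; first by rewrite /fB eqxx invr_gt0 rate0.
have x0' : 0 < x by rewrite lt_def x_neq0.
have x1 : x <= 1 by lra.
rewrite fB_hsum // -/c ltf_pV2 ?posrE ?rate0 //.
have tyx : y^-1 - 1 < x^-1 - 1 by rewrite ltrD2r ltf_pV2.
have := hsum_add_inv_lt c n _ _ c0 (t0 y y0 y1) tyx; lra.
Qed.
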